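(* Let $d, C \ge 1$ be integers, let $\epsilon > 0$, and for each $c = 1, \dots, C$ let $\hat{Z}^c \in \mathbb{R}^{d \times n_c}$ with $n_c \ge 1$. Put $n = \sum_{c=1}^C n_c$ and let $\hat{Z} = [\hat{Z}^1, \hat{Z}^2, \dots, \hat{Z}^C] \in \mathbb{R}^{d \times n}$ be the horizontal concatenation. For a matrix $W \in \mathbb{R}^{d \times m}$ define the coding rate $$R(W, \epsilon) = \frac{1}{2} \log\det\Big(I_d + \frac{1}{m \epsilon} W W^\top\Big),$$ and define $$\mathrm{TrR} = R(\hat{Z}, \epsilon) - \sum_{c=1}^C \frac{n_c}{n} R(\hat{Z}^c, \epsilon).$$ Then: (i) $\mathrm{TrR} \ge 0$, and equality holds when $\frac{1}{n}\hat{Z}\hat{Z}^\top = \frac{1}{n_c}\hat{Z}^c (\hat{Z}^c)^\top$ for all $c = 1, \dots, C$. (ii) $$\mathrm{TrR} \le \frac{1}{2} \sum_{c=1}^{C} \left( \log\det\Big(I_d + \frac{1}{n \epsilon} \hat{Z}^c (\hat{Z}^c)^\top\Big) - \frac{n_c}{n} \log\det\Big(I_d + \frac{1}{n_c \epsilon} \hat{Z}^c (\hat{Z}^c)^\top\Big) \right),$$ and equality holds when $\hat{Z}^{c_1} (\hat{Z}^{c_2})^\top = 0$ for all $1 \le c_1 < c_2 \le C$.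
   Context: $I_d$ denotes the $d \times d$ identity matrix and $\log\det$ is the logarithm of the determinant (of a symmetric positive definite matrix). The columns of $\hat{Z}^c$ are thought of as feature vectors of the samples in class $c$; $\mathrm{TrR}$ is the paper's ''TransRate'' score. *)

From HB Require Import structures.
From mathcomp Require Import all_boot all_order all_algebra.
From mathcomp Require Import all_classical all_reals all_analysis.
Set Implicit Arguments. Unset Strict Implicit. Unset Printing Implicit Defensive.
Import Order.TTheory GRing.Theory Num.Theory.
Local Open Scope ring_scope.

Definition logdet (R : realType) (d : nat) (A : 'M[R]_d) : R := ln (\det A).

Definition coding_rate (R : realType) (d m : nat) (W : 'M[R]_(d, m)) (eps : R) : R :=
  2^-1 * logdet (1%:M + (m%:R * eps)^-1 *: (W *m W^T)).

Definition concat_cols (R : realType) (d C : nat) (nc : 'I_C -> nat)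
  (Z : forall c : 'I_C, 'M[R]_(d, nc c)) : 'M[R]_(d, \sum_(c < C) nc c) :=
  mxrow Z.

Definition TrR (R : realType) (d C : nat) (nc : 'I_C -> nat)
  (Z : forall c : 'I_C, 'M[R]_(d, nc c)) (eps : R) : R :=
  coding_rate (concat_cols Z) eps
  - \sum_(c < C) ((nc c)%:R / (\sum_(c' < C) nc c')%:R) * coding_rate (Z c) eps.

From HB Require Import structures.
From mathcomp Require Import all_boot all_order all_algebra.
From mathcomp Require Import all_classical all_reals all_analysis.
From mathcomp Require Import ring lra.
Import Order.TTheory GRing.Theory Num.Theory.
Local Open Scope ring_scope.

Set Implicit Arguments. Unset Strict Implicit. Unset Printing Implicit Defensive.

(* Both parts rest on two determinant inequalities for positive definite
   matrices, proved by induction on the dimension through the Schur complement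
   of the top-left entry, which splits det M as M_00 * det (schur M).

   (i) is the concavity of log det.  With M_c = I + Z^c Z^c^T / (n_c eps),
   the matrix I + Z Z^T / (n eps) is the convex combination of the M_c with
   weights n_c / n.  The pivots combine by Jensen's inequality for ln, and the
   Schur complement of a convex combination dominates the combination of the
   Schur complements; monotonicity of det in the Loewner order then closes the
   induction.  If every class has the covariance of the whole sample, all M_c
   coincide and both sides are equal.

   (ii) is the subadditivity det (P + Y Y^T) <= det P * det (I + Y Y^T) for
   P = I + A with A positive semidefinite.  Sylvester's identity turns the two
   sides into det P * det (I + Y^T P^-1 Y) and det P * det (I + Y^T Y), and
   P^-1 <= I in the Loewner order.  When the classes are mutually orthogonal,
   P Y = Y, so P^-1 Y = Y and equality holds. *)

Section QuadraticForm.
Variable R : realFieldType.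

Definition qform n (M : 'M[R]_n) (x : 'rV[R]_n) : R := (x *m M *m x^T) 0 0.
Definition posdefmx n (M : 'M[R]_n) := M^T = M /\ forall x, x != 0 -> 0 < qform M x.
Definition psdmx n (M : 'M[R]_n) := M^T = M /\ forall x, 0 <= qform M x.

Lemma qformD n (A B : 'M[R]_n) x : qform (A + B) x = qform A x + qform B x.
Proof. by rewrite /qform mulmxDr mulmxDl mxE. Qed.

Lemma qformZ n k (A : 'M[R]_n) x : qform (k *: A) x = k * qform A x.
Proof. by rewrite /qform -scalemxAr -scalemxAl mxE. Qed.

Lemma qformB n (A B : 'M[R]_n) x : qform (A - B) x = qform A x - qform B x.
Proof. by rewrite /qform mulmxBr mulmxBl !mxE. Qed.

Lemma qform0 n (A : 'M[R]_n) : qform A 0 = 0.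
Proof. by rewrite /qform !mul0mx mxE. Qed.

Lemma qform_sum (I : Type) (s : seq I) n (F : I -> 'M[R]_n) x :
  qform (\sum_(i <- s) F i) x = \sum_(i <- s) qform (F i) x.
Proof. by rewrite /qform mulmx_sumr mulmx_suml summxE. Qed.

Lemma qform_conj n m (B : 'M[R]_n) (Y : 'M[R]_(n, m)) y :
  qform (Y^T *m B *m Y) y = qform B (y *m Y^T).
Proof. by rewrite /qform trmx_mul trmxK !mulmxA. Qed.

Lemma qform_gram n m (Y : 'M[R]_(n, m)) x : qform (Y *m Y^T) x = qform 1%:M (x *m Y).
Proof. by rewrite /qform mulmx1 trmx_mul !mulmxA. Qed.

Lemma qform1_ge0 n (x : 'rV[R]_n) : 0 <= qform 1%:M x.
Proof. by rewrite /qform mulmx1 mxE sumr_ge0 // => j _; rewrite mxE -expr2 sqr_ge0. Qed.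

Lemma qform1_gt0 n (x : 'rV[R]_n) : x != 0 -> 0 < qform 1%:M x.
Proof.
move=> /matrix0Pn [i [j xij]]; rewrite /qform mulmx1 mxE (bigD1 j) //= mxE -expr2.
rewrite ltr_pwDl ?sumr_ge0 // => [|k _]; last by rewrite mxE -expr2 sqr_ge0.
by rewrite exprn_even_gt0 // -(ord1 i).
Qed.

Lemma psdmx0 n : psdmx (0 : 'M[R]_n).
Proof. by split=> [|x]; rewrite ?trmx0 // /qform mulmx0 mul0mx mxE. Qed.

Lemma psdmxD n (A B : 'M[R]_n) : psdmx A -> psdmx B -> psdmx (A + B).
Proof.
by case=> sA pA [sB pB]; split=> [|x]; rewrite ?linearD /= ?sA ?sB // qformD addr_ge0.
Qed.

Lemma psdmxZ n k (A : 'M[R]_n) : 0 <= k -> psdmx A -> psdmx (k *: A).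
Proof.
by move=> k0 [sA pA]; split=> [|x]; rewrite ?linearZ /= ?sA // qformZ mulr_ge0.
Qed.

Lemma psdmx_gram n m (Y : 'M[R]_(n, m)) : psdmx (Y *m Y^T).
Proof. by split=> [|x]; rewrite ?trmx_mul ?trmxK // qform_gram qform1_ge0. Qed.

Lemma psdmx_conj n m (B : 'M[R]_n) (Y : 'M[R]_(n, m)) : psdmx B -> psdmx (Y^T *m B *m Y).
Proof.
by case=> sB pB; split=> [|y]; rewrite ?qform_conj // !trmx_mul trmxK sB mulmxA.
Qed.

Lemma posdefmx1D n (A : 'M[R]_n) : psdmx A -> posdefmx (1%:M + A).
Proof.
case=> sA pA; split=> [|x x0]; first by rewrite linearD /= trmx1 sA.
by rewrite qformD ltr_pwDl ?qform1_gt0.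
Qed.

Lemma weighted_sum_gt0 (I : finType) (w F : I -> R) :
  (forall i, 0 < w i) -> \sum_i w i = 1 -> (forall i, 0 < F i) ->
  0 < \sum_i w i * F i.
Proof.
move=> wp w1 Fp; have [i _ | I0] := pickP (fun _ : I => true).
  rewrite (bigD1 i) //= ltr_pwDl ?mulr_gt0 ?sumr_ge0 // => j _.
  by rewrite ltW ?mulr_gt0.
by move: w1; rewrite big1 => [/eqP|i _]; [rewrite eq_sym oner_eq0 | move: (I0 i)].
Qed.

Lemma posdefmx_convex (I : finType) n (w : I -> R) (M : I -> 'M[R]_n) :
  (forall i, 0 < w i) -> \sum_i w i = 1 -> (forall i, posdefmx (M i)) ->
  posdefmx (\sum_i w i *: M i).
Proof.
move=> wp w1 pM; split=> [|x x0].
  by rewrite linear_sum; apply: eq_bigr => i _; rewrite linearZ /= (proj1 (pM i)).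
rewrite qform_sum; under eq_bigr do rewrite qformZ.
by apply: weighted_sum_gt0 => // i; apply: (proj2 (pM i)).
Qed.

End QuadraticForm.

Section SchurComplement.
Variables (R : realFieldType) (n : nat).
Implicit Types (M : 'M[R]_(1 + n)) (y : 'rV[R]_n).

Definition pivot M : R := ulsubmx M 0 0.

(* This is the Schur complement of the pivot only when [M] is symmetric. *)
Definition schur M : 'M[R]_n :=
  drsubmx M - (pivot M)^-1 *: ((ursubmx M)^T *m ursubmx M).

Lemma qform_block M s y : M^T = M ->
  qform M (row_mx s%:M y) =
  s ^+ 2 * pivot M + 2 * s * (ursubmx M *m y^T) 0 0 + qform (drsubmx M) y.
Proof.
move=> sM; have dlM : dlsubmx M = (ursubmx M)^T by rewrite trmx_ursub sM.
rewrite /qform -{1}(submxK M) tr_row_mx mul_row_block mul_row_col dlM.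
rewrite tr_scalar_mx !mul_scalar_mx !mulmxDl mul_mx_scalar -scalemxAl mul_mx_scalar.
rewrite -[y *m _]trmxK trmx_mul trmxK /pivot.
set a := ulsubmx M; set b := ursubmx M *m y^T; set c := y *m drsubmx M *m y^T.
rewrite !mxE; ring.
Qed.

Lemma qform_schur M s y : M^T = M -> pivot M != 0 ->
  qform M (row_mx s%:M y) =
  pivot M * (s + (ursubmx M *m y^T) 0 0 / pivot M) ^+ 2 + qform (schur M) y.
Proof.
move=> sM a0; rewrite qform_block // /schur qformB qformZ /qform.
rewrite [y *m (_^T *m _)]mulmxA -[y *m _^T]trmxK trmx_mul trmxK.
set b := ursubmx M *m y^T; rewrite -[b^T *m _ *m _]mulmxA -/b.
by rewrite [(b^T *m b) 0 0]mxE big_ord1 !mxE; field.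
Qed.

Lemma schur_le M s y : M^T = M -> 0 < pivot M ->
  qform (schur M) y <= qform M (row_mx s%:M y).
Proof.
by move=> sM a0; rewrite qform_schur ?gt_eqF // lerDr mulr_ge0 ?sqr_ge0 // ltW.
Qed.

Lemma schur_eq M y : M^T = M -> 0 < pivot M ->
  exists s, qform (schur M) y = qform M (row_mx s%:M y).
Proof.
move=> sM a0; exists (- ((ursubmx M *m y^T) 0 0 / pivot M)).
by rewrite qform_schur ?gt_eqF // addNr expr0n mulr0 add0r.
Qed.

Lemma qform_pivot M : M^T = M -> qform M (row_mx 1%:M 0) = pivot M.
Proof. by move=> sM; rewrite qform_block // trmx0 mulmx0 qform0 mxE; ring. Qed.

Lemma posdefmx_pivot M : posdefmx M -> 0 < pivot M.
Proof.
case=> sM pM; rewrite -qform_pivot // pM // row_mx_eq0 negb_and.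
by rewrite -[1%:M]/(1 : 'M[R]_1) oner_eq0.
Qed.

Lemma schur_sym M : M^T = M -> (schur M)^T = schur M.
Proof.
by move=> sM; rewrite /schur linearB /= linearZ /= trmx_mul trmxK trmx_drsub sM.
Qed.

Lemma posdefmx_schur M : posdefmx M -> posdefmx (schur M).
Proof.
move=> pM; have a0 := posdefmx_pivot pM; case: pM => sM pM.
split=> [|y y0]; first exact: schur_sym.
have [s ->] := schur_eq y sM a0.
by rewrite pM // row_mx_eq0 negb_and y0 orbT.
Qed.

Lemma det_schur M : M^T = M -> pivot M != 0 -> \det M = pivot M * \det (schur M).
Proof.
move=> sM a0.
pose L : 'M[R]_(1 + n) := block_mx 1%:M 0 (- ((pivot M)^-1 *: dlsubmx M)) 1%:M.
have -> : \det M = \det (L *m M) by rewrite det_mulmx det_lblock !det1 !mul1r.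
rewrite /L -[X in _ *m X](submxK M) mulmx_block !mul1mx !mul0mx !addr0.
have -> : ulsubmx M = (pivot M)%:M by exact: mx11_scalar.
rewrite mul_mx_scalar scalerN scalerA mulfV // scale1r addNr det_ublock.
by rewrite det_scalar1 mulNmx -scalemxAl addrC /schur trmx_ursub sM.
Qed.

Lemma pivot_convex (I : finType) (w : I -> R) (M : I -> 'M[R]_(1 + n)) :
  pivot (\sum_i w i *: M i) = \sum_i w i * pivot (M i).
Proof.
by rewrite /pivot !mxE summxE; apply: eq_bigr => i _; rewrite !mxE.
Qed.

Lemma qform_schur_convex (I : finType) (w : I -> R) (M : I -> 'M[R]_(1 + n)) y :
  (forall i, 0 < w i) -> \sum_i w i = 1 -> (forall i, posdefmx (M i)) ->
  qform (\sum_i w i *: schur (M i)) y <= qform (schur (\sum_i w i *: M i)) y.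
Proof.
move=> wp w1 pM; have pN := posdefmx_convex wp w1 pM.
have [s ->] := schur_eq y (proj1 pN) (posdefmx_pivot pN).
rewrite !qform_sum; apply: ler_sum => i _; rewrite !qformZ ler_pM2l //.
by apply: schur_le; [case: (pM i) | apply: posdefmx_pivot].
Qed.

End SchurComplement.

Section DetPosdef.
Variable R : realFieldType.

Lemma det_posdefmx_gt0 n (M : 'M[R]_n) : posdefmx M -> 0 < \det M.
Proof.
elim: n M => [|n IH] M pM; first by rewrite det_mx00.
pose M' : 'M[R]_(1 + n) := M.
have a0 := posdefmx_pivot (M := M') pM.
rewrite (det_schur (M := M')) ?(gt_eqF a0) //; last by case: pM.
by rewrite mulr_gt0 // IH //; apply: posdefmx_schur.
Qed.

Lemma posdefmx_unit n (M : 'M[R]_n) : posdefmx M -> M \in unitmx.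
Proof. by move/det_posdefmx_gt0 => h; rewrite unitmxE unitfE gt_eqF. Qed.

Lemma ler_det_posdefmx n (A B : 'M[R]_n) : posdefmx A -> posdefmx B ->
  (forall x, qform A x <= qform B x) -> \det A <= \det B.
Proof.
elim: n A B => [|n IH] A B pA pB leAB; first by rewrite !det_mx00.
pose A' : 'M[R]_(1 + n) := A; pose B' : 'M[R]_(1 + n) := B.
have aA := posdefmx_pivot (M := A') pA; have aB := posdefmx_pivot (M := B') pB.
have sA : A'^T = A' by case: pA.
have sB : B'^T = B' by case: pB.
rewrite (det_schur sA) ?(gt_eqF aA) // (det_schur sB) ?(gt_eqF aB) //.
apply: ler_pM.
- exact: ltW.
- exact/ltW/det_posdefmx_gt0/posdefmx_schur.
- rewrite -(qform_pivot sA) -(qform_pivot sB); exact: leAB.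
- apply: IH; try exact: posdefmx_schur.
  move=> y; have [s ->] := schur_eq y sB aB; exact/(le_trans _ (leAB _))/schur_le.
Qed.

End DetPosdef.

Section LogdetConcave.
Variable R : realType.

Lemma jensen_ln (I : finType) (w x : I -> R) :
  (forall i, 0 < w i) -> \sum_i w i = 1 -> (forall i, 0 < x i) ->
  \sum_i w i * ln (x i) <= ln (\sum_i w i * x i).
Proof.
move=> wp w1 xp; set m := \sum_i w i * x i.
have m0 : 0 < m by apply: weighted_sum_gt0.
have le_i i : w i * ln (x i) <= w i * ln m + (w i * x i / m - w i).
  have : ln (1 + (x i / m - 1)) <= x i / m - 1.
    by apply: le_ln1Dx; have := divr_gt0 (xp i) m0; lra.
  rewrite addrC subrK ln_div ?posrE // => h.
  have := ler_wpM2l (ltW (wp i)) h; lra.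
apply: le_trans (ler_sum _ (fun i _ => le_i i)) _.
rewrite big_split /= sumrB -mulr_suml w1 mul1r -mulr_suml -/m divff ?gt_eqF //.
by rewrite subrr addr0.
Qed.

Lemma logdet_concave (I : finType) n (w : I -> R) (M : I -> 'M[R]_n) :
  (forall i, 0 < w i) -> \sum_i w i = 1 -> (forall i, posdefmx (M i)) ->
  \sum_i w i * logdet (M i) <= logdet (\sum_i w i *: M i).
Proof.
rewrite /logdet; elim: n M => [|n IH] M wp w1 pM.
  by rewrite det_mx00 ln1 big1 // => i _; rewrite det_mx00 ln1 mulr0.
have ln_det_schur (N : 'M[R]_(1 + n)) :
    posdefmx N -> ln (\det N) = ln (pivot N) + ln (\det (schur N)).
  move=> pN; have aN := posdefmx_pivot pN.
  rewrite det_schur ?gt_eqF ?(proj1 pN) // lnM ?posrE //.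
  exact/det_posdefmx_gt0/posdefmx_schur.
have pN := posdefmx_convex wp w1 pM.
under eq_bigr => i _ do rewrite (ln_det_schur _ (pM i)) mulrDr.
rewrite big_split /= (ln_det_schur _ pN); apply: lerD.
  by rewrite pivot_convex; apply: jensen_ln => // i; apply: posdefmx_pivot.
have pS i := posdefmx_schur (pM i).
have pSN := posdefmx_schur pN; have pSc := posdefmx_convex wp w1 pS.
apply: le_trans (IH _ wp w1 pS) _.
rewrite ler_ln ?posrE ?det_posdefmx_gt0 //.
by apply: ler_det_posdefmx => // y; apply: qform_schur_convex.
Qed.

End LogdetConcave.

Section DetGram.
Variable R : realFieldType.

Lemma sylvester_det d m (X : 'M[R]_(d, m)) (Y : 'M[R]_(m, d)) :
  \det (1%:M + X *m Y) = \det (1%:M + Y *m X).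
Proof.
pose B : 'M[R]_(d + m) := block_mx 1%:M (- X) Y 1%:M.
have eXY : \det (block_mx 1%:M X 0 1%:M *m B) = \det (1%:M + X *m Y).
  rewrite mulmx_block !mul1mx !mul0mx !mulmx1 !add0r addNr.
  by rewrite det_lblock det1 mulr1.
have eYX : \det (block_mx 1%:M 0 (- Y) 1%:M *m B) = \det (1%:M + Y *m X).
  rewrite mulmx_block !mul1mx !mul0mx !mulmx1 !addr0 !mulNmx addNr mulmxN opprK.
  by rewrite det_ublock det1 mul1r addrC.
by rewrite -eXY -eYX !det_mulmx det_ublock det_lblock !det1 !mulr1.
Qed.

Lemma det1D_gramC d m (k : R) (Y : 'M[R]_(d, m)) :
  \det (1%:M + k *: (Y *m Y^T)) = \det (1%:M + k *: (Y^T *m Y)).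
Proof. by rewrite scalemxAl sylvester_det -scalemxAr. Qed.

Lemma det_addmx_gram d m (P : 'M[R]_d) (Y : 'M[R]_(d, m)) (k : R) : P \in unitmx ->
  \det (P + k *: (Y *m Y^T)) = \det P * \det (1%:M + k *: (Y^T *m invmx P *m Y)).
Proof.
move=> uP; have -> : P + k *: (Y *m Y^T) = P *m (1%:M + (invmx P *m (k *: Y)) *m Y^T).
  by rewrite mulmxDr mulmx1 !mulmxA (mulmxV uP) mul1mx -scalemxAl.
by rewrite det_mulmx sylvester_det -!scalemxAr mulmxA.
Qed.

Lemma qform_invmx1D n (A : 'M[R]_n) v : psdmx A ->
  0 <= qform (invmx (1%:M + A)) v <= qform 1%:M v.
Proof.
move=> pA; have uP := posdefmx_unit (posdefmx1D pA); case: pA => sA pA.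
set P := 1%:M + A in uP *; have sP : P^T = P by rewrite linearD /= trmx1 sA.
set u := v *m invmx P; have -> : v = u *m P by rewrite /u mulmxKV.
have -> : qform (invmx P) (u *m P) = qform P u.
  by rewrite /qform trmx_mul sP !mulmxA mulmxKV.
have -> : qform 1%:M (u *m P) = qform P u + qform A u + qform (A^T *m A) u.
  have PP : P *m P = P + A + A^T *m A.
    by rewrite sA /P mulmxDl mul1mx mulmxDr mulmx1 addrA.
  by rewrite -!qformD -PP /qform mulmx1 trmx_mul sP !mulmxA.
have qP : 0 <= qform P u by rewrite qformD addr_ge0 ?qform1_ge0.
have qAA : 0 <= qform (A^T *m A) u by have [_] := psdmx_gram A^T; rewrite trmxK.
by rewrite qP -addrA lerDl addr_ge0.
Qed.

Lemma psdmx_invmx1D n (A : 'M[R]_n) : psdmx A -> psdmx (invmx (1%:M + A)).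
Proof.
move=> pA; split=> [|v]; last by case/andP: (qform_invmx1D v pA).
by rewrite trmx_inv linearD /= trmx1 (proj1 pA).
Qed.

Lemma det_1D_gram_le d m (A : 'M[R]_d) (Y : 'M[R]_(d, m)) (k : R) :
  psdmx A -> 0 <= k ->
  \det (1%:M + A + k *: (Y *m Y^T)) <= \det (1%:M + A) * \det (1%:M + k *: (Y *m Y^T)).
Proof.
move=> pA k0; have pP := posdefmx1D pA.
rewrite det_addmx_gram ?posdefmx_unit // det1D_gramC.
rewrite ler_pM2l ?det_posdefmx_gt0 //; apply: ler_det_posdefmx.
- exact/posdefmx1D/psdmxZ/psdmx_conj/psdmx_invmx1D.
- by apply/posdefmx1D/psdmxZ => //; have := psdmx_gram Y^T; rewrite trmxK.
- move=> y; rewrite !qformD !qformZ qform_conj lerD2l ler_wpM2l //.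
  have -> : qform (Y^T *m Y) y = qform 1%:M (y *m Y^T).
    by rewrite -{2}[Y]trmxK qform_gram.
  by have /andP[] := qform_invmx1D (y *m Y^T) pA.
Qed.

Lemma det_1D_gram_eq d m (A : 'M[R]_d) (Y : 'M[R]_(d, m)) (k : R) :
  psdmx A -> A *m Y = 0 ->
  \det (1%:M + A + k *: (Y *m Y^T)) = \det (1%:M + A) * \det (1%:M + k *: (Y *m Y^T)).
Proof.
move=> pA AY; have uP := posdefmx_unit (posdefmx1D pA).
have PY : (1%:M + A) *m Y = Y by rewrite mulmxDl mul1mx AY addr0.
by rewrite det_addmx_gram // det1D_gramC -mulmxA -{2}PY mulKmx.
Qed.

End DetGram.

Section LogdetGram.
Variable R : realType.

Lemma logdet1D_gram_le d m (A : 'M[R]_d) (Y : 'M[R]_(d, m)) (k : R) :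
  psdmx A -> 0 <= k ->
  logdet (1%:M + A + k *: (Y *m Y^T)) <=
  logdet (1%:M + A) + logdet (1%:M + k *: (Y *m Y^T)).
Proof.
move=> pA k0; have pY := psdmxZ k0 (psdmx_gram Y).
have [pP pQ] := (posdefmx1D pA, posdefmx1D pY).
have pAY : posdefmx (1%:M + A + k *: (Y *m Y^T)).
  by rewrite -addrA; exact/posdefmx1D/psdmxD.
rewrite /logdet -lnM ?posrE ?det_posdefmx_gt0 //.
by rewrite ler_ln ?posrE ?mulr_gt0 ?det_posdefmx_gt0 ?det_1D_gram_le.
Qed.

Lemma logdet1D_gram_eq d m (A : 'M[R]_d) (Y : 'M[R]_(d, m)) (k : R) :
  psdmx A -> 0 <= k -> A *m Y = 0 ->
  logdet (1%:M + A + k *: (Y *m Y^T)) =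
  logdet (1%:M + A) + logdet (1%:M + k *: (Y *m Y^T)).
Proof.
move=> pA k0 AY; have pQ := posdefmx1D (psdmxZ k0 (psdmx_gram Y)).
have pP := posdefmx1D pA.
by rewrite /logdet det_1D_gram_eq // lnM ?posrE ?det_posdefmx_gt0.
Qed.

Section GramSum.
Variables (d : nat) (I : eqType) (m : I -> nat) (Z : forall i, 'M[R]_(d, m i)) (k : R).
Hypothesis k0 : 0 <= k.

Lemma psdmx_gram_sum (s : seq I) : psdmx (\sum_(i <- s) k *: (Z i *m (Z i)^T)).
Proof.
elim: s => [|i s IH]; rewrite ?big_nil ?big_cons; first exact: psdmx0.
exact/psdmxD/IH/psdmxZ/psdmx_gram.
Qed.

Lemma logdet_gram_sum_le (s : seq I) :
  logdet (1%:M + \sum_(i <- s) k *: (Z i *m (Z i)^T)) <=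
  \sum_(i <- s) logdet (1%:M + k *: (Z i *m (Z i)^T)).
Proof.
elim: s => [|i s IH]; first by rewrite !big_nil addr0 /logdet det1 ln1.
rewrite !big_cons addrA addrAC [X in _ <= X]addrC.
apply: le_trans (logdet1D_gram_le (Z i) (psdmx_gram_sum s) k0) _.
by rewrite lerD2r.
Qed.

Lemma logdet_gram_sum_eq (s : seq I) : uniq s ->
  (forall i j, i != j -> (Z i)^T *m Z j = 0) ->
  logdet (1%:M + \sum_(i <- s) k *: (Z i *m (Z i)^T)) =
  \sum_(i <- s) logdet (1%:M + k *: (Z i *m (Z i)^T)).
Proof.
move=> + orthZ; elim: s => [|i s IH]; first by rewrite !big_nil addr0 /logdet det1 ln1.
case/andP=> i_notin_s uniq_s; rewrite !big_cons addrA addrAC [RHS]addrC -IH //.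
apply: logdet1D_gram_eq => //; first exact: psdmx_gram_sum.
rewrite mulmx_suml big1_seq // => j /andP[_ js].
rewrite -scalemxAl -mulmxA orthZ ?mulmx0 ?scaler0 //.
by apply: contraNneq i_notin_s => <-.
Qed.

End GramSum.

End LogdetGram.

Section TransRate.
Variables (R : realType) (d C : nat) (nc : 'I_C -> nat).
Variables (Z : forall c : 'I_C, 'M[R]_(d, nc c)) (eps : R).
Hypotheses (hC : (1 <= C)%N) (heps : 0 < eps) (hnc : forall c, (1 <= nc c)%N).

Local Notation n := (\sum_(c < C) nc c)%N.
Local Notation w c := ((nc c)%:R / n%:R : R).
Local Notation rate_mx m W := (1%:M + (m%:R * eps)^-1 *: (W *m W^T)).

Lemma concat_cols_gram : concat_cols Z *m (concat_cols Z)^T = \sum_c Z c *m (Z c)^T.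
Proof. by rewrite /concat_cols tr_mxrow mul_mxrow_mxcol. Qed.

Lemma sample_size_gt0 : (0 < n)%N.
Proof. by rewrite (bigD1 (Ordinal hC)) //=; exact: leq_trans (hnc _) (leq_addr _ _). Qed.

Lemma weight_gt0 c : 0 < w c.
Proof. by rewrite divr_gt0 ?ltr0n ?hnc ?sample_size_gt0. Qed.

Lemma weights_sum1 : \sum_c w c = 1.
Proof. by rewrite -mulr_suml -natr_sum divff // pnatr_eq0 -lt0n sample_size_gt0. Qed.

Lemma posdefmx_rate m (W : 'M[R]_(d, m)) : (0 < m)%N -> posdefmx (rate_mx m W).
Proof.
move=> m_gt0; apply/posdefmx1D/psdmxZ; last exact: psdmx_gram.
by rewrite invr_ge0 ltW // mulr_gt0 // ltr0n.
Qed.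

Lemma rate_mx_convex : rate_mx n (concat_cols Z) = \sum_c w c *: rate_mx (nc c) (Z c).
Proof.
under [RHS]eq_bigr => c _ do rewrite scalerDr scalerA.
rewrite big_split /= -scaler_suml weights_sum1 scale1r concat_cols_gram scaler_sumr.
congr (_ + _); apply: eq_bigr => c _; congr (_ *: _).
have nc0 : (nc c)%:R != 0 :> R by rewrite pnatr_eq0 -lt0n hnc.
have n0 : n%:R != 0 :> R by rewrite pnatr_eq0 -lt0n sample_size_gt0.
by field; rewrite nc0 n0 gt_eqF.
Qed.

Lemma TrRE : TrR Z eps = 2^-1 *
  (logdet (rate_mx n (concat_cols Z)) - \sum_c w c * logdet (rate_mx (nc c) (Z c))).
Proof.
rewrite /TrR /coding_rate mulrBr mulr_sumr; congr (_ - _).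
by apply: eq_bigr => c _; rewrite mulrCA.
Qed.

Lemma TrR_ge0 : 0 <= TrR Z eps.
Proof.
rewrite TrRE mulr_ge0 ?invr_ge0 ?ler0n // subr_ge0 rate_mx_convex.
apply: logdet_concave; [exact: weight_gt0 | exact: weights_sum1 | move=> c].
exact: posdefmx_rate.
Qed.

Lemma TrR_eq0 :
  (forall c, (n%:R)^-1 *: (concat_cols Z *m (concat_cols Z)^T) =
             ((nc c)%:R)^-1 *: (Z c *m (Z c)^T)) ->
  TrR Z eps = 0.
Proof.
move=> same_cov; have rate_c c : rate_mx (nc c) (Z c) = rate_mx n (concat_cols Z).
  by rewrite !invfM ![_^-1 * eps^-1]mulrC -!scalerA (same_cov c).
rewrite TrRE; under [X in _ - X]eq_bigr => c _ do rewrite rate_c.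
by rewrite -mulr_suml weights_sum1 mul1r subrr mulr0.
Qed.

Lemma TrR_le_bound : TrR Z eps <= 2^-1 * \sum_c
  (logdet (rate_mx n (Z c)) - w c * logdet (rate_mx (nc c) (Z c))).
Proof.
rewrite TrRE sumrB ler_pM2l ?invr_gt0 ?ltr0n // lerD2r concat_cols_gram scaler_sumr.
by apply: logdet_gram_sum_le; rewrite invr_ge0 ltW // mulr_gt0 // ltr0n sample_size_gt0.
Qed.

Lemma TrR_eq_bound : (forall c1 c2 : 'I_C, (c1 < c2)%N -> (Z c1)^T *m Z c2 = 0) ->
  TrR Z eps = 2^-1 * \sum_c
    (logdet (rate_mx n (Z c)) - w c * logdet (rate_mx (nc c) (Z c))).
Proof.
move=> orthZ; rewrite TrRE sumrB concat_cols_gram scaler_sumr logdet_gram_sum_eq //.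
- by rewrite invr_ge0 ltW // mulr_gt0 // ltr0n sample_size_gt0.
- exact: index_enum_uniq.
move=> c1 c2; case: (ltngtP c1 c2) => [lt12 | lt21 | /val_inj->]; rewrite ?eqxx //.
  by rewrite orthZ.
by rewrite -[LHS]trmxK trmx_mul trmxK orthZ ?trmx0.
Qed.

End TransRate.

Theorem lemma3 (R : realType) (d C : nat) (nc : 'I_C -> nat)
  (Z : forall c : 'I_C, 'M[R]_(d, nc c)) (eps : R)
  (hd : (1 <= d)%N) (hC : (1 <= C)%N) (heps : 0 < eps)
  (hnc : forall c, (1 <= nc c)%N) :
  let n := (\sum_(c < C) nc c)%N in
  let Zh := concat_cols Z in
  (* (i) *)
  (0 <= TrR Z eps /\
   ((forall c : 'I_C, (n%:R)^-1 *: (Zh *m Zh^T) = ((nc c)%:R)^-1 *: (Z c *m (Z c)^T)) ->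
    TrR Z eps = 0)) /\
  (* (ii) *)
  (let bound := 2^-1 * \sum_(c < C)
        (logdet (1%:M + (n%:R * eps)^-1 *: (Z c *m (Z c)^T))
         - ((nc c)%:R / n%:R) * logdet (1%:M + ((nc c)%:R * eps)^-1 *: (Z c *m (Z c)^T))) in
   TrR Z eps <= bound /\
   ((forall c1 c2 : 'I_C, (c1 < c2)%N -> (Z c1)^T *m Z c2 = 0) -> TrR Z eps = bound)).
Proof.
move=> n Zh; split; first split.
- exact: TrR_ge0.
- exact: TrR_eq0.
move=> bound; split.
- exact: TrR_le_bound.
- exact: TrR_eq_bound.
Qed.
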